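(* There is an absolute constant $c>0$ such that the following holds. Let $G$ be a finite Abelian group, $p\ge2$ an even integer, $S\subseteq G$, $\{f_g\}_{g\in S}$ real-valued functions on $G$, $B\subseteq G$ a regular Bohr set, and $B',B''\subseteq B_\tau$ regular Bohr sets with $\tau\le c/\mathrm{rk}(B)$. Then \[ \Big\|\sum_{g\in S}f_g\circ f_g\Big\|_{p(\mu_{B'}\circ\mu_{B'}*\mu_{B''}\circ\mu_{B''})}\ge\frac12\Big\|\sum_{g\in S}f_g\circ f_g^{g}\Big\|_{p(\mu_B)}, \] where $f^g(x)=f(x-g)$.
   Context: Averages normalized over $G$: $(f\circ g)(x)=\mathbb{E}_yf(y)g(x+y)$, $(f*g)(x)=\mathbb{E}_yf(y)g(x-y)$; $\mu_X=\frac{|G|}{|X|}1_X$; for $\nu\ge0$, $\|f\|_{p(\nu)}=(\mathbb{E}_x\nu(x)|f(x)|^p)^{1/p}$. Bohr set: for nonempty $\Gamma\subseteq\widehat G$, $\phi\in[0,2]$, $\mathrm{Bohr}(\Gamma,\phi)=\{x:|1-\gamma(x)|\le\phi\ \forall\gamma\in\Gamma\}$, rank $|\Gamma|$; dilate $B_\rho=\mathrm{Bohr}(\Gamma,\rho\phi)$. $B$ of rank $r$ is regular if for all $0\le\kappa\le1/(100r)$: $|B_{1+\kappa}|\le(1+100\kappa r)|B|$ and $|B_{1-\kappa}|\ge(1-100\kappa r)|B|$. *)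

From HB Require Import structures.
From mathcomp Require Import all_boot all_order all_algebra.
From mathcomp Require Import complex.
From mathcomp Require Import reals exp.
Set Implicit Arguments. Unset Strict Implicit. Unset Printing Implicit Defensive.
Import Order.TTheory GRing.Theory Num.Theory.
Local Open Scope ring_scope.
Local Open Scope complex_scope.

Section FourierDefs.
Variable R : realType.
Variable G : finZmodType.

Definition Ex (f : G -> R) : R := (#|G|%:R)^-1 * \sum_(x : G) f x.

Definition corr (f g : G -> R) : G -> R := fun x => Ex (fun y => f y * g (x + y)).
Definition conv (f g : G -> R) : G -> R := fun x => Ex (fun y => f y * g (x - y)).

Definition mu (X : {set G}) : G -> R :=
  fun x => (#|G|%:R / #|X|%:R) * (x \in X)%:R.

Definition lpnorm (p : nat) (nu f : G -> R) : R :=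
  (Ex (fun x => nu x * `|f x| ^+ p)) `^ (p%:R^-1).

Definition shift (f : G -> R) (g : G) : G -> R := fun x => f (x - g).

Definition is_char (gam : {ffun G -> R[i]}) : Prop :=
  forall x y : G, gam (x + y) = gam x * gam y /\ gam x != 0.

Definition bohr_data (Gam : seq {ffun G -> R[i]}) (phi : R) : Prop :=
  [/\ Gam != [::], uniq Gam, (forall gam, gam \in Gam -> is_char gam)
    & 0 <= phi <= 2].

(* Bohr(Gamma, phi) = {x : |1 - gam(x)| <= phi for all gam in Gamma};
   the dilate B_rho is bohr Gam (rho * phi). *)
Definition bohr (Gam : seq {ffun G -> R[i]}) (phi : R) : {set G} :=
  [set x | all (fun gam : {ffun G -> R[i]} => `|1 - gam x| <= phi%:C) Gam].

Definition rk (Gam : seq {ffun G -> R[i]}) : nat := size Gam.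

Definition regular (Gam : seq {ffun G -> R[i]}) (phi : R) : Prop :=
  let r := (rk Gam)%:R in
  forall kappa : R, 0 <= kappa -> kappa <= (100 * r)^-1 ->
    (#|bohr Gam ((1 + kappa) * phi)|%:R <= (1 + 100 * kappa * r) * #|bohr Gam phi|%:R)
    /\ (#|bohr Gam ((1 - kappa) * phi)|%:R >= (1 - 100 * kappa * r) * #|bohr Gam phi|%:R).

End FourierDefs.
Arguments mu {R G} X x.
Arguments lpnorm {R G} p nu f.

From HB Require Import structures.
From mathcomp Require Import all_boot all_order all_algebra.
From mathcomp Require Import complex.
From mathcomp Require Import reals exp.
From mathcomp Require fingroup cyclic.
From mathcomp Require Import ring lra.
Import Order.TTheory GRing.Theory Num.Theory.
Local Open Scope ring_scope.
Local Open Scope complex_scope.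
Set Implicit Arguments. Unset Strict Implicit. Unset Printing Implicit Defensive.

(* With T_g = f_g o f_g, the function sum_g f_g o f_g^g is T(x) = sum_g T_g(x - g),
   while T0 = sum_g T_g. As p is even, T(x)^p expands into a sum over p-tuples
   (g_i) in S of the products prod_i T_{g_i}(x - g_i). Each such product is the
   restriction to a translate of the diagonal of a positive-definite kernel on
   G^p (the autocorrelation of a tensor product), and averaging a
   positive-definite kernel along the diagonal against
   nu = mu_B' o mu_B' * mu_B'' o mu_B'' keeps it positive definite. A
   positive-definite kernel is maximal at 0, so E nu(u) |T(u + y)|^p <= E nu |T0|^p
   for every y. Finally nu is supported on B_{4 tau}, hence
   mu_B <= (|B_{1+4tau}|/|B|) mu_{B_{1+4tau}} * nu, the ratio is at most 2 by
   regularity of B, and taking p-th roots costs at most 2^(1/p) <= 2. *)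

Section FinZmodOrder.
Import fingroup cyclic.

Lemma mulrn_card (G : finZmodType) (x : G) : x *+ #|G| = 0.
Proof.
have := @expg_cardG _ [set: G]%G x (in_setT x).
by rewrite cardsT -FinRing.zmodXgE.
Qed.

End FinZmodOrder.

Section Characters.
Variables (R : realType) (G : finZmodType).
Implicit Types (gam : {ffun G -> R[i]}) (x y : G).

Lemma char0 gam : is_char gam -> gam 0 = 1.
Proof.
move=> gamM; have [e nz] := gamM 0 0; rewrite addr0 in e.
by apply: (mulfI nz); rewrite -e mulr1.
Qed.

Lemma charMn gam x n : is_char gam -> gam (x *+ n) = gam x ^+ n.
Proof.
move=> gamM; elim: n => [|n IHn]; first by rewrite mulr0n expr0 char0.
by rewrite mulrS exprS (gamM x _).1 IHn.
Qed.

Lemma char_norm gam x : is_char gam -> `|gam x| = 1.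
Proof.
move=> gamM; apply/eqP; rewrite -(@pexpr_eq1 _ _ #|G|) //; last first.
  by apply/card_gt0P; exists 0.
by rewrite -normrX -charMn // mulrn_card char0 // normr1.
Qed.

Lemma char_dist1D gam x y : is_char gam ->
  `|1 - gam (x + y)| <= `|1 - gam x| + `|1 - gam y|.
Proof.
move=> gamM; rewrite (gamM x y).1.
have -> : 1 - gam x * gam y = (1 - gam x) + gam x * (1 - gam y).
  by rewrite mulrBr mulr1 addrA subrK.
by rewrite (le_trans (ler_normD _ _)) // normrM char_norm // mul1r.
Qed.

Lemma char_dist1N gam x : is_char gam -> `|1 - gam (- x)| = `|1 - gam x|.
Proof.
move=> gamM; have gamNx : gam (- x) * gam x = 1 by rewrite -(gamM _ _).1 addNr char0.
have -> : 1 - gam (- x) = gam (- x) * (gam x - 1) by rewrite mulrBr gamNx mulr1.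
by rewrite normrM char_norm // mul1r distrC.
Qed.

End Characters.

Section BohrArithmetic.
Variables (R : realType) (G : finZmodType) (Gam : seq {ffun G -> R[i]}).
Hypothesis Gam_char : forall gam, gam \in Gam -> is_char gam.

Lemma bohrD a b x y :
  x \in bohr Gam a -> y \in bohr Gam b -> x + y \in bohr Gam (a + b).
Proof.
rewrite !inE => /allP xB /allP yB; apply/allP => gam gamGam.
rewrite (le_trans (char_dist1D _ _ (Gam_char gamGam))) // rmorphD.
by rewrite lerD ?xB ?yB.
Qed.

Lemma bohrN a x : x \in bohr Gam a -> - x \in bohr Gam a.
Proof.
rewrite !inE => /allP xB; apply/allP => gam gamGam.
by rewrite /= (char_dist1N _ (Gam_char gamGam)) xB.
Qed.

Lemma bohrB a b x y :
  x \in bohr Gam a -> y \in bohr Gam b -> x - y \in bohr Gam (a + b).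
Proof. by move=> xB yB; rewrite bohrD ?bohrN. Qed.

Lemma mem0_bohr a : 0 <= a -> 0 \in bohr Gam a.
Proof.
move=> a_ge0; rewrite inE; apply/allP => gam gamGam.
by rewrite /= (char0 (Gam_char gamGam)) subrr normr0 lecR.
Qed.

End BohrArithmetic.

Lemma bohr_radius_ge0 (R : realType) (G : finZmodType) (Gam : seq {ffun G -> R[i]})
    a x :
  Gam != [::] -> x \in bohr Gam a -> 0 <= a.
Proof.
case: Gam => [//|gam Gam] _; rewrite inE /= => /andP [xB _].
by rewrite -lecR rmorph0 (le_trans _ xB).
Qed.

Section Averages.
Variables (R : realType) (G : finZmodType).
Implicit Types (a b nu h : G -> R) (X : {set G}).

Lemma cardG_neq0 : (#|G|%:R : R) != 0.
Proof. by rewrite pnatr_eq0 -lt0n; apply/card_gt0P; exists 0. Qed.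

Lemma eq_Ex a b : a =1 b -> Ex a = Ex b.
Proof. by move=> eq_ab; rewrite /Ex (eq_bigr _ (fun x _ => eq_ab x)). Qed.

Lemma mulr_Ex c a : c * Ex a = Ex (fun x => c * a x).
Proof. by rewrite /Ex mulrCA mulr_sumr. Qed.

Lemma ler_Ex a b : (forall x, a x <= b x) -> Ex a <= Ex b.
Proof. by move=> le_ab; rewrite ler_wpM2l ?invr_ge0 // ler_sum. Qed.

Lemma Ex_ge0 a : (forall x, 0 <= a x) -> 0 <= Ex a.
Proof. by move=> a_ge0; rewrite /Ex mulr_ge0 ?invr_ge0 // sumr_ge0. Qed.

Lemma Ex_exchange (F : G -> G -> R) :
  Ex (fun x => Ex (F x)) = Ex (fun y => Ex (F^~ y)).
Proof.
rewrite /Ex -!mulr_sumr; congr (_ * (_ * _)); exact: exchange_big.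
Qed.

Lemma Ex_addr a c : Ex (fun x => a (x + c)) = Ex a.
Proof. by rewrite /Ex [in RHS](reindex_inj (addIr c)). Qed.

Lemma Ex_subr a c : Ex (fun x => a (c - x)) = Ex a.
Proof. by rewrite /Ex [in RHS](reindex_inj (subrI c)). Qed.

Lemma Ex_neq0 a : Ex a != 0 -> exists x, a x != 0.
Proof.
move=> Ea_neq0; apply/existsP; apply: contraNT Ea_neq0 => /existsPn a0.
by rewrite /Ex big1 ?mulr0 // => x _; apply/eqP/negbNE/a0.
Qed.

Lemma mu_ge0 X x : 0 <= mu X x :> R.
Proof. by rewrite /mu mulr_ge0 ?divr_ge0. Qed.

Lemma mu_neq0 X x : mu X x != 0 :> R -> x \in X.
Proof. by rewrite /mu; case: (x \in X); rewrite ?mulr0 ?eqxx. Qed.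

Lemma Ex_mu X : X != set0 -> Ex (mu X) = 1 :> R.
Proof.
move=> X_neq0; rewrite /Ex /mu -mulr_sumr.
have -> : \sum_x (x \in X)%:R = #|X|%:R :> R.
  rewrite -sum1_card natr_sum [RHS]big_mkcond.
  by apply: eq_bigr => x _; case: (x \in X).
by rewrite divfK ?mulVf ?cardG_neq0 // pnatr_eq0 -lt0n card_gt0.
Qed.

Lemma corr_ge0 a b x :
  (forall y, 0 <= a y) -> (forall y, 0 <= b y) -> 0 <= corr a b x.
Proof. by move=> a_ge0 b_ge0; apply: Ex_ge0 => y; rewrite mulr_ge0. Qed.

Lemma conv_ge0 a b x :
  (forall y, 0 <= a y) -> (forall y, 0 <= b y) -> 0 <= conv a b x.
Proof. by move=> a_ge0 b_ge0; apply: Ex_ge0 => y; rewrite mulr_ge0. Qed.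

Lemma corr_shift a g x : corr a (shift a g) x = corr a a (x - g).
Proof. by apply: eq_Ex => y; rewrite /shift addrAC. Qed.

Lemma Ex_corr a b : Ex (corr a b) = Ex a * Ex b.
Proof.
rewrite /corr Ex_exchange [RHS]mulrC mulr_Ex; apply: eq_Ex => y /=.
by rewrite mulrC mulr_Ex (Ex_addr (fun x => a y * b x)).
Qed.

Lemma Ex_conv a b : Ex (conv a b) = Ex a * Ex b.
Proof.
rewrite /conv Ex_exchange [RHS]mulrC mulr_Ex; apply: eq_Ex => y /=.
by rewrite mulrC mulr_Ex (Ex_addr (fun x => a y * b x)).
Qed.

Lemma Ex_conv_mulr a nu h :
  Ex (fun x => conv a nu x * h x) = Ex (fun y => a y * Ex (fun u => nu u * h (u + y))).
Proof.
transitivity (Ex (fun x => Ex (fun y => a y * (nu (x - y) * h x)))).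
  by apply: eq_Ex => x; rewrite mulrC mulr_Ex; apply: eq_Ex => y; rewrite mulrC -mulrA.
rewrite Ex_exchange; apply: eq_Ex => y /=; rewrite mulr_Ex -(Ex_addr _ y).
by apply: eq_Ex => u; rewrite addrK.
Qed.

End Averages.

Arguments Ex_mu {R G X}.

Section PositiveDefinite.
Variables (R : realFieldType) (V : finZmodType).
Implicit Types (P k : V -> R) (s : V).

Definition autocorr P s : R := \sum_z P z * P (s + z).

Definition posdef k : Prop :=
  exists c P, 0 <= c /\ forall s, k s = c * autocorr P s.

Lemma autocorr_le0 P s : autocorr P s <= autocorr P 0.
Proof.
have sq_sum : \sum_z P (s + z) ^+ 2 = \sum_z P z ^+ 2.
  by rewrite [RHS](reindex_inj (addrI s)).
have amgm z : P z * P (s + z) <= (P z ^+ 2 + P (s + z) ^+ 2) / 2.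
  by rewrite ler_pdivlMr // mulrC; have := sqr_ge0 (P z - P (s + z)); nra.
rewrite (le_trans (ler_sum _ (fun z _ => amgm z))) // -mulr_suml big_split /= sq_sum.
rewrite /autocorr; under [X in _ <= X]eq_bigr => z _ do rewrite add0r -expr2.
lra.
Qed.

Lemma posdef_le0 k s : posdef k -> k s <= k 0.
Proof. by case=> c [P [c_ge0 kE]]; rewrite !kE ler_wpM2l ?autocorr_le0. Qed.

Lemma eq_posdef k k' : k =1 k' -> posdef k' -> posdef k.
Proof. by move=> eq_k [c [P [c_ge0 k'E]]]; exists c, P; split=> // s; rewrite eq_k. Qed.

Lemma posdefZ c k : 0 <= c -> posdef k -> posdef (fun s => c * k s).
Proof.
move=> c_ge0 [d [P [d_ge0 kE]]]; exists (c * d), P.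
by split=> [|s]; rewrite ?mulr_ge0 // kE mulrA.
Qed.

End PositiveDefinite.

Section DiagonalAveraging.
Variables (R : realType) (G V : finZmodType) (phi : G -> V).
Hypothesis phiD : {morph phi : x y / x + y}.

Lemma posdef_avg_corr (a : G -> R) (k : V -> R) :
  posdef k -> posdef (fun s => \sum_u corr a a u * k (s + phi u)).
Proof.
case=> c [P [c_ge0 kE]].
pose Q y := \sum_e a e * P (y + phi e).
exists (#|G|%:R^-1 * c), Q; split=> [|s]; first by rewrite mulr_ge0 ?invr_ge0.
(* Substituting e = u + w and z = y + phi w turns the average into the
   autocorrelation of Q. *)
pose F w e y := a w * a e * (P (y + phi w) * P (s + y + phi e)).
transitivity (#|G|%:R^-1 * c * \sum_w \sum_e \sum_y F w e y).
  transitivity (#|G|%:R^-1 * c * \sum_u \sum_w \sum_z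
                  a w * a (u + w) * (P z * P (s + phi u + z))).
    rewrite mulr_sumr; apply: eq_bigr => u _.
    rewrite kE /autocorr /corr /Ex mulrACA mulr_suml; congr (_ * _).
    by apply: eq_bigr => w _; rewrite mulr_sumr.
  congr (_ * _); rewrite exchange_big; apply: eq_bigr => w _ /=.
  rewrite (@reindex_inj _ _ _ _ _ xpredT _ (subIr w)) /=; apply: eq_bigr => e _.
  rewrite (@reindex_inj _ _ _ _ _ xpredT _ (addIr (phi w))) /=; apply: eq_bigr => y _.
  by rewrite /F subrK addrACA -phiD subrK.
rewrite /autocorr; congr (_ * _); symmetry.
transitivity (\sum_y \sum_w \sum_e F w e y).
  apply: eq_bigr => y _; rewrite mulr_suml; apply: eq_bigr => w _.
  by rewrite mulr_sumr; apply: eq_bigr => e _; rewrite /F mulrACA.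
by rewrite exchange_big; apply: eq_bigr => w _; rewrite exchange_big.
Qed.

Lemma posdef_avg_conv_corr (a b : G -> R) (k : V -> R) :
  posdef k -> posdef (fun s => \sum_u conv (corr a a) (corr b b) u * k (s + phi u)).
Proof.
move=> k_pd; have k2_pd := posdef_avg_corr a (posdef_avg_corr b k_pd).
have n_ge0 : 0 <= #|G|%:R^-1 :> R by rewrite invr_ge0.
apply: (eq_posdef _ (posdefZ n_ge0 k2_pd)) => s /=.
transitivity (#|G|%:R^-1 * \sum_u \sum_y corr a a y * (corr b b (u - y) * k (s + phi u))).
  rewrite mulr_sumr; apply: eq_bigr => u _; rewrite /conv /Ex -mulrA mulr_suml.
  by congr (_ * _); apply: eq_bigr => y _; rewrite mulrA.
congr (_ * _); rewrite exchange_big; apply: eq_bigr => y _ /=; rewrite mulr_sumr.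
rewrite (@reindex_inj _ _ _ _ _ xpredT _ (addIr y)) /=; apply: eq_bigr => v _.
by rewrite addrK phiD [phi v + _]addrC addrA.
Qed.

End DiagonalAveraging.

HB.instance Definition _ (G : finZmodType) (p : nat) :=
  GRing.Zmodule.on {ffun 'I_p -> G}.

Section TensorPower.
Variables (R : realType) (G : finZmodType) (p : nat).

Lemma posdef_prod_corr (h : 'I_p -> G -> R) :
  posdef (fun t : {ffun 'I_p -> G} => \prod_i corr (h i) (h i) (t i)).
Proof.
exists (#|G|%:R^-1 ^+ p), (fun z : {ffun 'I_p -> G} => \prod_i h i (z i)).
split=> [|t]; first by rewrite exprn_ge0 ?invr_ge0.
rewrite /corr /Ex big_split /= prodr_const card_ord; congr (_ * _).
rewrite bigA_distr_bigA /autocorr; apply: eq_bigr => z _.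
by rewrite -big_split /=; apply: eq_bigr => i _; rewrite ffunE.
Qed.

Lemma diag_ffunD : {morph (fun u : G => [ffun=> u] : {ffun 'I_p -> G}) : x y / x + y}.
Proof. by move=> x y; apply/ffunP => i; rewrite !ffunE. Qed.

Lemma translate_power_corr_le (S : {set G}) (f : G -> G -> R) (a b : G -> R) y :
  Ex (fun u => conv (corr a a) (corr b b) u * (\sum_(g in S) corr (f g) (f g) (u + y - g)) ^+ p)
  <= Ex (fun u => conv (corr a a) (corr b b) u * (\sum_(g in S) corr (f g) (f g) u) ^+ p).
Proof.
have powE (F : G -> R) :
    (\sum_(g in S) F g) ^+ p = \sum_(gs in ffun_on (mem S)) \prod_(i < p) F (gs i).
  by rewrite -[in LHS](card_ord p) -prodr_const bigA_distr_big.
rewrite ler_wpM2l ?invr_ge0 //.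
under eq_bigr => u _ do rewrite powE mulr_sumr.
under [X in _ <= X]eq_bigr => u _ do rewrite powE mulr_sumr.
rewrite exchange_big [X in _ <= X]exchange_big /=; apply: ler_sum => gs _.
have := posdef_le0 [ffun i => y - gs i] (posdef_avg_conv_corr diag_ffunD a b
          (posdef_prod_corr (fun i => f (gs i)))).
congr (_ <= _); apply: eq_bigr => u _; congr (_ * _); apply: eq_bigr => i _.
  by rewrite !ffunE addrC addrA.
by rewrite !ffunE add0r.
Qed.

Lemma translate_norm_power_le (S : {set G}) (f : G -> G -> R) (a b : G -> R) :
  ~~ odd p -> forall y,
  Ex (fun u => conv (corr a a) (corr b b) u *
               `|\sum_(g in S) corr (f g) (shift (f g) g) (u + y)| ^+ p)
  <= Ex (fun u => conv (corr a a) (corr b b) u * `|\sum_(g in S) corr (f g) (f g) u| ^+ p).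
Proof.
move=> p_even y; have normE z : `|z| ^+ p = z ^+ p :> R.
  by rewrite -normrX ger0_norm ?exprn_even_ge0.
under eq_Ex => u do rewrite normE; under [X in _ <= X]eq_Ex => u do rewrite normE.
under eq_Ex => u do under eq_bigr => g _ do rewrite corr_shift.
exact: translate_power_corr_le.
Qed.

End TensorPower.


Section Domination.
Variables (R : realType) (G : finZmodType).
Implicit Types (nu h : G -> R) (D : {set G}).

Lemma conv_mu_eq D nu x : Ex nu = 1 ->
  (forall y, nu (x - y) != 0 -> y \in D) -> conv (mu D) nu x = #|G|%:R / #|D|%:R.
Proof.
move=> Ex_nu nuD; transitivity (#|G|%:R / #|D|%:R * Ex nu); last by rewrite Ex_nu mulr1.
rewrite -(Ex_subr _ x) mulr_Ex; apply: eq_Ex => y.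
have [->|/nuD yD] := eqVneq (nu (x - y)) 0; first by rewrite !mulr0.
by rewrite /mu yD mulr1.
Qed.

Lemma Ex_mu_mul_le (B D : {set G}) nu h h0 :
  B != set0 -> D != set0 -> (forall x, 0 <= nu x) -> (forall x, 0 <= h x) ->
  (forall x, x \in B -> conv (mu D) nu x = #|G|%:R / #|D|%:R) ->
  (forall y, Ex (fun u => nu u * h (u + y)) <= Ex (fun u => nu u * h0 u)) ->
  Ex (fun x => mu B x * h x) <= #|D|%:R / #|B|%:R * Ex (fun x => nu x * h0 x).
Proof.
move=> B_neq0 D_neq0 nu_ge0 h_ge0 convB h_shift.
have card_neq0 X : X != set0 -> (#|X|%:R : R) != 0.
  by move=> X_neq0; rewrite pnatr_eq0 -lt0n card_gt0.
set K := #|D|%:R / #|B|%:R.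
have K_ge0 : 0 <= K by rewrite divr_ge0.
have mu_le x : mu B x <= K * conv (mu D) nu x.
  have [xB|xNB] := boolP (x \in B).
    rewrite convB // /mu xB mulr1 /K le_eqVlt; apply/orP; left; apply/eqP.
    by field; rewrite !card_neq0.
  by rewrite /mu (negbTE xNB) mulr0 mulr_ge0 ?conv_ge0 // => y; apply: mu_ge0.
apply: (le_trans (ler_Ex (fun x => ler_wpM2r (h_ge0 x) (mu_le x)))).
have -> : Ex (fun x => K * conv (mu D) nu x * h x) = K * Ex (fun x => conv (mu D) nu x * h x).
  by rewrite mulr_Ex; apply: eq_Ex => x; rewrite mulrA.
rewrite Ex_conv_mulr ler_wpM2l //.
apply: (@le_trans _ _ (Ex (fun y => mu D y * Ex (fun u => nu u * h0 u)))).
  by apply: ler_Ex => y; rewrite ler_wpM2l ?mu_ge0.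
rewrite le_eqVlt; apply/orP; left; apply/eqP.
by rewrite -[RHS]mulr1 -(Ex_mu D_neq0) mulr_Ex; apply: eq_Ex => y; rewrite mulrC.
Qed.

End Domination.

Section BohrSupport.
Variables (R : realType) (G : finZmodType) (Gam : seq {ffun G -> R[i]}).
Hypothesis Gam_char : forall gam, gam \in Gam -> is_char gam.
Implicit Types (X : {set G}) (t : R).

Lemma corr_mu_neq0_bohr X t x : X \subset bohr Gam t ->
  corr (mu X) (mu X) x != 0 :> R -> x \in bohr Gam (t + t).
Proof.
move=> /subsetP XB /Ex_neq0 [y]; rewrite mulf_eq0 negb_or => /andP [/mu_neq0 yX /mu_neq0 xyX].
by rewrite -(addrK y x) bohrB ?XB.
Qed.

Lemma conv_corr_mu_neq0_bohr X1 X2 t x :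
  X1 \subset bohr Gam t -> X2 \subset bohr Gam t ->
  conv (corr (mu X1) (mu X1)) (corr (mu X2) (mu X2)) x != 0 :> R ->
  x \in bohr Gam (t + t + (t + t)).
Proof.
move=> X1B X2B /Ex_neq0 [y]; rewrite mulf_eq0 negb_or => /andP [y_neq0 xy_neq0].
rewrite -(subrK y x) addrC.
by apply: bohrD => //; [apply: corr_mu_neq0_bohr X1B _ | apply: corr_mu_neq0_bohr X2B _].
Qed.

Lemma conv_corr_mu_dilate_eq X1 X2 phi t x :
  X1 != set0 -> X2 != set0 -> X1 \subset bohr Gam t -> X2 \subset bohr Gam t ->
  x \in bohr Gam phi ->
  let D := bohr Gam (phi + (t + t + (t + t))) in
  conv (mu D) (conv (corr (mu X1) (mu X1)) (corr (mu X2) (mu X2))) x = #|G|%:R / #|D|%:R :> R.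
Proof.
move=> X1_neq0 X2_neq0 X1B X2B xB D; apply: conv_mu_eq.
  by rewrite Ex_conv !Ex_corr !Ex_mu // !mulr1.
move=> y /(conv_corr_mu_neq0_bohr X1B X2B) xy.
by rewrite -[y](subKr x) bohrB.
Qed.

End BohrSupport.


Lemma card_bohr_dilate_le2 (R : realType) (G : finZmodType) (Gam : seq {ffun G -> R[i]})
    (phi tau : R) :
  Gam != [::] -> regular Gam phi -> 0 <= phi -> 0 <= tau * phi ->
  tau <= 400^-1 / (rk Gam)%:R ->
  #|bohr Gam ((1 + 4 * tau) * phi)|%:R <= 2 * #|bohr Gam phi|%:R :> R.
Proof.
move=> Gam_neq0 Gam_reg phi_ge0 t_ge0 tau_le.
have [->|phi_neq0] := eqVneq phi 0.
  by rewrite mulr0 ler_peMl ?ler1n.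
have phi_gt0 : 0 < phi by rewrite lt_def phi_neq0.
have tau_ge0 : 0 <= tau by rewrite -(pmulr_lge0 _ phi_gt0).
have r_gt0 : 0 < (rk Gam)%:R :> R by rewrite ltr0n lt0n size_eq0.
move: tau_le; rewrite ler_pdivlMr // => tau_r.
have kappa_le : 4 * tau <= (100 * (rk Gam)%:R)^-1.
  by rewrite -div1r ler_pdivlMr ?mulr_gt0 //; nra.
have [card_le _] := Gam_reg (4 * tau) (mulr_ge0 (ler0n _ 4) tau_ge0) kappa_le.
by rewrite (le_trans card_le) // ler_wpM2r //; nra.
Qed.

Lemma powR_le_mul (R : realType) (c x y r : R) :
  1 <= c -> 0 <= r <= 1 -> 0 <= x -> 0 <= y <= c * x -> y `^ r <= c * x `^ r.
Proof.
move=> c_ge1 /andP [r_ge0 r_le1] x_ge0 /andP [y_ge0 y_le].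
have c_ge0 : 0 <= c by lra.
rewrite (le_trans (ge0_ler_powR r_ge0 _ _ y_le)) ?nnegrE ?mulr_ge0 //.
by rewrite powRM // ler_wpM2r ?powR_ge0 ?ler1_powR.
Qed.

Theorem lemma4p6 (R : realType) :
  exists c : R, 0 < c /\
  forall (G : finZmodType) (p : nat) (S : {set G}) (f : G -> G -> R)
         (Gam : seq {ffun G -> R[i]}) (phi : R)
         (Gam1 : seq {ffun G -> R[i]}) (phi1 : R)
         (Gam2 : seq {ffun G -> R[i]}) (phi2 : R) (tau : R),
    ~~ odd p -> (2 <= p)%N ->
    bohr_data Gam phi -> regular Gam phi ->
    bohr_data Gam1 phi1 -> regular Gam1 phi1 ->
    bohr_data Gam2 phi2 -> regular Gam2 phi2 ->
    bohr Gam1 phi1 \subset bohr Gam (tau * phi) ->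
    bohr Gam2 phi2 \subset bohr Gam (tau * phi) ->
    tau <= c / (rk Gam)%:R ->
    let B := bohr Gam phi in
    let B1 := bohr Gam1 phi1 in
    let B2 := bohr Gam2 phi2 in
    lpnorm p (conv (corr (mu B1) (mu B1)) (corr (mu B2) (mu B2)))
             (fun x => \sum_(g in S) corr (f g) (f g) x)
    >= 2^-1 * lpnorm p (mu B)
             (fun x => \sum_(g in S) corr (f g) (shift (f g) g) x).
Proof.
exists 400^-1; split; first by rewrite invr_gt0 ltr0n.
move=> G p S f Gam phi Gam1 phi1 Gam2 phi2 tau p_even p_ge2
  [Gam_neq0 _ Gam_char /andP [phi_ge0 _]] Gam_reg [_ _ Gam1_char /andP [phi1_ge0 _]] _
  [_ _ Gam2_char /andP [phi2_ge0 _]] _ B1_sub B2_sub tau_le; cbv zeta.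
set B := bohr Gam phi; set B1 := bohr Gam1 phi1; set B2 := bohr Gam2 phi2.
set t := tau * phi; set D := bohr Gam (phi + (t + t + (t + t))).
have t_ge0 : 0 <= t.
  exact: bohr_radius_ge0 Gam_neq0 (subsetP B1_sub _ (mem0_bohr Gam1_char phi1_ge0)).
have [B_neq0 B1_neq0 B2_neq0 D_neq0] : [/\ B != set0, B1 != set0, B2 != set0 & D != set0].
  by split; apply/set0Pn; exists 0; apply: mem0_bohr => //; lra.
have nu_ge0 x : 0 <= conv (corr (mu B1) (mu B1)) (corr (mu B2) (mu B2)) x :> R.
  by apply: conv_ge0 => y; apply: corr_ge0 => z; apply: mu_ge0.
have := Ex_mu_mul_le (h := fun x => `|\sum_(g in S) corr (f g) (shift (f g) g) x| ^+ p)
  B_neq0 D_neq0 nu_ge0 (fun x => exprn_ge0 p (normr_ge0 _))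
  (fun x => conv_corr_mu_dilate_eq Gam_char B1_neq0 B2_neq0 B1_sub B2_sub)
  (translate_norm_power_le S f _ _ p_even).
have -> : D = bohr Gam ((1 + 4 * tau) * phi) by congr bohr; rewrite /t; ring.
have K_le : #|bohr Gam ((1 + 4 * tau) * phi)|%:R / #|B|%:R <= 2 :> R.
  by rewrite ler_pdivrMr ?ltr0n ?card_gt0 // card_bohr_dilate_le2.
rewrite /lpnorm; set Y := Ex _; set X := Ex _ => Y_le.
have X_ge0 : 0 <= X by apply: Ex_ge0 => x; rewrite mulr_ge0 ?exprn_ge0.
have Y_ge0 : 0 <= Y by apply: Ex_ge0 => x; rewrite mulr_ge0 ?mu_ge0 ?exprn_ge0.
have r_le1 : p%:R^-1 <= 1 :> R by rewrite invf_le1 ?ler1n ?ltr0n ltnW.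
have Y_le2X : Y <= 2 * X by rewrite (le_trans Y_le) // ler_wpM2r.
have : Y `^ p%:R^-1 <= 2 * X `^ p%:R^-1.
  by apply: powR_le_mul; rewrite ?invr_ge0 ?ler0n ?r_le1 ?Y_ge0 ?Y_le2X //; lra.
lra.
Qed.
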